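(* Let $f:\mathbb{N}^k\to\mathbb{N}$ ($k\ge1$) be minimal. Then $f$ is bad.
   Context: $\mathbb{N}=\{0,1,2,\dots\}$. For $A\subseteq\mathbb{N}$, $\bar d(A)=\limsup_{n\to\infty}\frac{|A\cap[0,n)|}{n}$. $\mathscr{C}_{I_{\bar d=0}}$ is the set of all finitary functions $f:\mathbb{N}^k\to\mathbb{N}$ ($k\ge1$) such that $\bar d(f[A^k])=0$ whenever $\bar d(A)=0$. For $f:\mathbb{N}^k\to\mathbb{N}$, a permutation $\pi$ of $\{1,\dots,k\}$ and $\bar a=(a_1,\dots,a_\ell)\in\mathbb{N}^\ell$ with $0\le\ell<k$, the shadow $f_{\pi,\bar a}$ is the $(k-\ell)$-ary function $(y_1,\dots,y_{k-\ell})\mapsto f_\pi(a_1,\dots,a_\ell,y_1,\dots,y_{k-\ell})$, where $f_\pi(x_1,\dots,x_k)=f(x_{\pi(1)},\dots,x_{\pi(k)})$; it is proper if $\ell>0$. $f$ is minimal if $f\notin\mathscr{C}_{I_{\bar d=0}}$ and every proper shadow of $f$ lies in $\mathscr{C}_{I_{\bar d=0}}$. $f$ is bad if there exists a rational $\varepsilon>0$ such that for every $i\in\mathbb{N}$ there are $n,t\ge i$ and $A\subseteq[i,n)$ with $|A\cap[0,r)|\le\frac{r}{2^i}$ for all $r\in\mathbb{N}$ and $|f[A^k]\cap[0,t)|\ge\varepsilon t$. *)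

From HB Require Import structures.
From mathcomp Require Import all_boot all_order all_algebra all_fingroup.
From mathcomp Require Import all_classical all_reals all_analysis.
From mathcomp Require Import Rstruct.
Set Implicit Arguments. Unset Strict Implicit. Unset Printing Implicit Defensive.
Import Order.TTheory GRing.Theory Num.Theory.
Local Open Scope classical_set_scope.
Local Open Scope ring_scope.

Definition cnt (A : set nat) (n : nat) : nat := (\sum_(0 <= i < n) (i \in A : nat))%N.

Definition dbar (A : set nat) : \bar Rdefinitions.R :=
  limn_esup (fun n => ((cnt A n)%:R / n%:R : Rdefinitions.R)%:E).

Definition fimage (k : nat) (f : ('I_k -> nat) -> nat) (A : set nat) : set nat :=
  [set y | exists x : 'I_k -> nat, (forall j, A (x j)) /\ f x = y].

Definition inC (k : nat) (f : ('I_k -> nat) -> nat) : Prop :=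
  (0 < k)%N /\ forall A : set nat, dbar A = 0%E -> dbar (fimage f A) = 0%E.

(* shadow f_{pi, a} : (y_1..y_{k-l}) |-> f_pi(a_1..a_l, y_1..y_{k-l}),
   where f_pi(x_1..x_k) = f(x_{pi(1)},..,x_{pi(k)}) *)
Definition shadow (k l : nat) (f : ('I_k -> nat) -> nat) (pi : 'S_k)
  (a : 'I_l -> nat) : ('I_(k - l) -> nat) -> nat :=
  fun y => f (fun i : 'I_k =>
    nth 0%N ([seq a j | j <- enum 'I_l] ++ [seq y j | j <- enum 'I_(k - l)])
        (nat_of_ord (pi i))).

Definition minimal (k : nat) (f : ('I_k -> nat) -> nat) : Prop :=
  ~ inC f /\
  forall (l : nat) (pi : 'S_k) (a : 'I_l -> nat),
    (0 < l)%N -> (l < k)%N -> inC (shadow f pi a).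

Definition bad (k : nat) (f : ('I_k -> nat) -> nat) : Prop :=
  exists eps : rat, 0 < eps /\
    forall i : nat, exists (n t : nat) (A : set nat),
      (i <= n)%N /\ (i <= t)%N /\
      (forall x, A x -> (i <= x)%N /\ (x < n)%N) /\
      (forall r : nat, (cnt A r)%:Q <= r%:Q / ((2 ^ i)%N)%:Q) /\
      eps * t%:Q <= (cnt (fimage f (A)) t)%:Q.

From HB Require Import structures.
From mathcomp Require Import all_boot all_order all_algebra all_fingroup.
From mathcomp Require Import all_classical all_reals all_analysis.
From mathcomp Require Import Rstruct zify.
Set Implicit Arguments. Unset Strict Implicit. Unset Printing Implicit Defensive.
Import Order.TTheory GRing.Theory Num.Theory.
Local Open Scope classical_set_scope.

(* Since f is not in the class, some A of upper density 0 has an image f[A^k]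
   of upper density > 1/p. By minimality every slice f[{x in A^k | x_j = c}]
   is the image of A under a proper shadow, hence has density 0, and so does
   any finite union of slices. Given i, drop the initial part [0, M) of A,
   beyond which A is thinner than 2^-i: the images lost this way lie in
   finitely many slices, so at any large scale t where f[A^k] has t/p points
   below t, the rest of A still produces t/(2p) of them. Truncating it to a
   finite window [M, n) producing all these points gives the witness. *)

Lemma cnt0 A : cnt A 0 = 0%N.
Proof. by rewrite /cnt big_geq. Qed.

Lemma cntS A n : cnt A n.+1 = (cnt A n + (n \in A))%N.
Proof. by rewrite /cnt big_nat_recr. Qed.

Lemma cnt_set0 n : cnt set0 n = 0%N.
Proof. by elim: n => [|n IH]; rewrite ?cnt0 // cntS IH in_set0. Qed.

Lemma leq_cntU (A B C : set nat) n :
  (forall y, (y < n)%N -> A y -> B y \/ C y) -> (cnt A n <= cnt B n + cnt C n)%N.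
Proof.
elim: n => [|n IH] sub; first by rewrite !cnt0.
have := IH (fun y lt_yn => sub y (ltnW lt_yn)); rewrite !cntS.
have [An|] := boolP (n \in A); last by lia.
by case: (sub n (ltnSn n) (set_mem An)) => [/mem_set|/mem_set] ->; lia.
Qed.

Lemma leq_cnt (A B : set nat) n :
  (forall y, (y < n)%N -> A y -> B y) -> (cnt A n <= cnt B n)%N.
Proof.
move=> sub; rewrite -[cnt B n]addn0 -(cnt_set0 n).
by apply: leq_cntU => y lt_yn Ay; left; apply: sub.
Qed.

Lemma cnt_subsingleton (A : set nat) v n : (forall y, A y -> y = v) -> (cnt A n <= 1)%N.
Proof.
move=> Av; suff /leq_trans-> : (cnt A n <= (v < n))%N by case: (v < n).
elim: n => [|n IH]; first by rewrite cnt0.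
rewrite cntS; have [/set_mem/Av eq_nv|_] := boolP (n \in A).
  by move: IH; rewrite -eq_nv ltnn leqn0 => /eqP ->; rewrite ltnSn.
by rewrite addn0 (leq_trans IH) //; case: ltnP => // /ltnW; rewrite -ltnS => ->.
Qed.

Definition density0 (X : set nat) := forall q, (0 < q)%N ->
  exists N, forall n, (N <= n)%N -> (q * cnt X n <= n)%N.

Lemma density0_sub (X Y : set nat) : X `<=` Y -> density0 Y -> density0 X.
Proof.
move=> XY dY q q_gt0; have [N HN] := dY q q_gt0; exists N => n le_Nn.
by apply: leq_trans (HN n le_Nn); rewrite leq_mul2l leq_cnt ?orbT // => y _ /XY.
Qed.

Lemma density0U (X Y : set nat) : density0 X -> density0 Y -> density0 (X `|` Y).
Proof.
move=> dX dY q q_gt0.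
have [N1 HX] := dX (2 * q)%N ltac:(lia); have [N2 HY] := dY (2 * q)%N ltac:(lia).
exists (maxn N1 N2) => n le_Nn; have := HX n ltac:(lia); have := HY n ltac:(lia).
by have := @leq_cntU (X `|` Y) X Y n (fun y _ XYy => XYy); nia.
Qed.

Lemma density0_subsingleton (X : set nat) v : (forall y, X y -> y = v) -> density0 X.
Proof. by move=> Xv q q_gt0; exists q => n le_qn; have := cnt_subsingleton n Xv; nia. Qed.

Lemma density0_bigcup (I : finType) (T : I -> set nat) :
  (forall i, density0 (T i)) -> density0 (\bigcup_i T i).
Proof.
move=> dT; suff: density0 (fun y => exists2 i, i \in enum I & T i y).
  by apply: density0_sub => y [i _ Tiy]; exists i; rewrite ?mem_enum.
elim: (enum I) => [|i s IH].
  by apply: (@density0_subsingleton _ 0) => y [].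
apply: density0_sub (density0U (dT i) IH) => y [j]; rewrite inE => /orP[/eqP->|sj] Tjy.
  by left.
by right; exists j.
Qed.

Local Notation ratio X := (fun n => ((cnt X n)%:R / n%:R : Rdefinitions.R)%:E).

Lemma dbarE X : dbar X = ereal_inf (range (esups (ratio X))).
Proof. by rewrite /dbar limn_esup_lim; apply: cvg_lim => //; apply: cvg_esups_inf. Qed.

Lemma dbar_eq0_density0 X : dbar X = 0%E -> density0 X.
Proof.
rewrite dbarE => dX0 q q_gt0.
have : (ereal_inf (range (esups (ratio X))) < ((q%:R)^-1 : Rdefinitions.R)%:E)%E.
  by rewrite dX0 lte_fin invr_gt0 ltr0n.
move=> /ereal_inf_lt [_ [N _ <-] ltN]; exists N => n le_Nn.
have : (ratio X n <= esups (ratio X) N)%E by apply: ereal_sup_ubound; exists n.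
move=> /le_lt_trans /(_ ltN); rewrite lte_fin.
case: n le_Nn => [|n] _; first by rewrite cnt0 muln0.
rewrite ltr_pdivrMr ?ltr0n // ltr_pdivlMl ?ltr0n // -natrM ltr_nat; exact: ltnW.
Qed.

Lemma dbar_ge0 X : (0 <= dbar X)%E.
Proof.
rewrite dbarE; apply: le_ereal_inf_tmp => _ [n _ <-].
have : (ratio X n <= esups (ratio X) n)%E by apply: ereal_sup_ubound; exists n => /=.
by apply: le_trans; rewrite lee_fin divr_ge0.
Qed.

Lemma dbar_neq0_infinitely_often X : dbar X <> 0%E -> exists2 p, (0 < p)%N &
  forall N, exists2 m, (N <= m)%N & (m <= p * cnt X m)%N.
Proof.
move=> dX_neq0.
have [p p_gt0 ltp] :
    exists2 p, (0 < p)%N & (((p%:R)^-1 : Rdefinitions.R)%:E < dbar X)%E.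
  have : (0 < dbar X)%E by rewrite lt_neqAle dbar_ge0 andbT eq_sym; apply/eqP.
  case: (dbar X) => [r| |] //; last by exists 1%N; rewrite ?ltry.
  rewrite lte_fin => r_gt0; exists (Num.truncn r^-1).+1 => //.
  rewrite lte_fin -ltf_pV2 ?posrE ?invr_gt0 ?ltr0n // invrK; exact: truncnS_gt.
exists p => // N; move: ltp; rewrite dbarE => ltp.
have : (((p%:R)^-1 : Rdefinitions.R)%:E < esups (ratio X) N)%E.
  by apply: (lt_le_trans ltp); apply: ereal_inf_lbound; exists N.
move=> /ereal_sup_gt [_ [m le_Nm <-]]; rewrite lte_fin => ltm; exists m => //.
case: m le_Nm ltm => [|m] _ ltm; first by rewrite cnt0 mul0r ltNge invr_ge0 ler0n in ltm.
rewrite ltr_pdivlMr ?ltr0n // ltr_pdivrMl ?ltr0n // -natrM ltr_nat in ltm.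
exact: ltnW.
Qed.

Lemma ler_nat_divQ (a b c : nat) : (0 < c)%N -> (a%:Q <= b%:Q / c%:Q)%R = (c * a <= b)%N.
Proof. by move=> c_gt0; rewrite -!pmulrn ler_pdivlMr ?ltr0n // -natrM ler_nat mulnC. Qed.

Lemma ler_inv_natQ (a b c : nat) : (0 < c)%N -> (c%:Q^-1 * a%:Q <= b%:Q)%R = (a <= c * b)%N.
Proof.
by move=> c_gt0; rewrite mulrC -!pmulrn ler_pdivrMr ?ltr0n // -natrM ler_nat mulnC.
Qed.

Lemma fimageS k (f : ('I_k -> nat) -> nat) (A B : set nat) :
  A `<=` B -> fimage f A `<=` fimage f B.
Proof. by move=> AB y [x [Ax <-]]; exists x; split=> // j; apply: AB. Qed.

Definition slice_image k (f : ('I_k -> nat) -> nat) (A : set nat) (j : 'I_k) (c : nat) :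
  set nat := [set y | exists x, (forall i, A (x i)) /\ x j = c /\ f x = y].

Lemma nth_map_enum_ord K (g : 'I_K -> nat) s (lt_sK : (s < K)%N) :
  nth 0%N [seq g m | m <- enum 'I_K] s = g (Ordinal lt_sK).
Proof.
rewrite (nth_map (Ordinal lt_sK)) ?size_enum_ord //; congr g; apply: val_inj.
by rewrite /= nth_enum_ord.
Qed.

Lemma slice_image_sub_shadow n (f : ('I_n.+2 -> nat) -> nat) (A : set nat) j c :
  slice_image f A j c `<=` fimage (shadow f (tperm j ord0) (fun _ : 'I_1 => c)) A.
Proof.
move=> _ [x [Ax [xj <-]]].
exists (fun m : 'I_(n.+2 - 1) => x (tperm j ord0 (inord m.+1))).
split=> [m|]; first exact: Ax.
rewrite /shadow; congr f; apply: funext => i; rewrite nth_cat size_map size_enum_ord.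
have [lt_pi1|ge_pi1] := ltnP (tperm j ord0 i) 1.
  have pi_i0 : tperm j ord0 i = ord0 by apply: val_inj => /=; lia.
  have -> : i = j by apply: (@perm_inj _ (tperm j ord0)); rewrite pi_i0 tpermL.
  by rewrite tpermL (nth_map_enum_ord _ (ltn0Sn 0)) xj.
have lt_pin : (tperm j ord0 i - 1 < n.+2 - 1)%N by have := ltn_ord (tperm j ord0 i); lia.
rewrite (nth_map_enum_ord _ lt_pin) /=.
have -> : inord (tperm j ord0 i - 1).+1 = tperm j ord0 i.
  by apply: val_inj; rewrite /= inordK; lia.
by rewrite tpermK.
Qed.

Lemma minimal_slice_image_density0 k (f : ('I_k -> nat) -> nat) (A : set nat) j c :
  minimal f -> dbar A = 0%E -> density0 (slice_image f A j c).
Proof.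
case: k f j => [|[|n]] f j [_ shadowC] A0; first by case: j.
  apply: (@density0_subsingleton _ (f (fun _ => c))) => _ [x [_ [xj <-]]].
  by congr f; apply: funext => i; rewrite (ord1 i) -xj (ord1 j).
apply: (density0_sub (@slice_image_sub_shadow n f A j c)); apply: dbar_eq0_density0.
by have [_] := shadowC 1%N (tperm j ord0) (fun _ => c) isT isT; apply.
Qed.

Lemma fimage_finite_window k (f : ('I_k -> nat) -> nat) (B : set nat) t :
  exists n, forall y, (y < t)%N -> fimage f B y ->
    fimage f (B `&` [set x | (x < n)%N]) y.
Proof.
elim: t => [|t [n IH]]; first by exists 0%N.
have [[x [Bx fx_t]]|fBt] := pselect (fimage f B t); last first.
  by exists n => y; rewrite ltnS leq_eqVlt => /orP[/eqP->|] //; apply: IH.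
exists (maxn n (\max_(j < k) x j).+1) => y; rewrite ltnS leq_eqVlt.
case/orP=> [/eqP->|lt_yt] fBy.
  exists x; split=> // j; split=> //=.
  by have := @leq_bigmax _ (fun j => x j) j; rewrite /=; lia.
move: (IH y lt_yt fBy); apply: fimageS => z [Bz /= lt_zn]; split=> //=; lia.
Qed.

Lemma fimage_sub_tail_slices k (f : ('I_k -> nat) -> nat) (A : set nat) M :
  fimage f A `<=`
  fimage f (A `&` [set x | (M <= x)%N])
  `|` \bigcup_(cj : 'I_M * 'I_k) slice_image f A cj.2 cj.1.
Proof.
move=> _ [x [Ax <-]].
have [tail|] := pselect (forall j, (M <= x j)%N).
  by left; exists x; split=> // j; split=> /=.
move=> /existsNP[j /negP]; rewrite -ltnNge => lt_xjM.
by right; exists (Ordinal lt_xjM, j) => //; exists x.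
Qed.

Lemma cnt_tail_sparse (A : set nat) q N M : (N <= M)%N ->
  (forall r, (N <= r)%N -> (q * cnt A r <= r)%N) ->
  forall r, (q * cnt (A `&` [set x | (M <= x)%N]) r <= r)%N.
Proof.
move=> le_NM sparseA r; have [lt_rM|le_Mr] := ltnP r M.
  suff -> : cnt (A `&` [set x | (M <= x)%N]) r = 0%N by rewrite muln0.
  by apply/eqP; rewrite -leqn0 -(cnt_set0 r) leq_cnt // => y lt_yr [_ /= le_My]; lia.
apply: leq_trans (sparseA r (leq_trans le_NM le_Mr)).
by rewrite leq_mul2l leq_cnt ?orbT // => y _ [].
Qed.

Lemma bad_of_density0_slices k (f : ('I_k -> nat) -> nat) (A : set nat) :
  dbar A = 0%E -> dbar (fimage f A) <> 0%E ->
  (forall j c, density0 (slice_image f A j c)) -> bad f.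
Proof.
move=> A0 fA_neq0 slices0.
have [p p_gt0 fA_large] := dbar_neq0_infinitely_often fA_neq0.
exists (((2 * p)%N%:Q)^-1)%R; split=> [|i].
  by rewrite invr_gt0 -pmulrn ltr0n muln_gt0 p_gt0.
have [N sparseA] := dbar_eq0_density0 A0 (expn_gt0 2 i).
pose M := maxn N i; pose B := A `&` [set x | (M <= x)%N].
pose S := \bigcup_(cj : 'I_M * 'I_k) slice_image f A cj.2 cj.1.
have p2_gt0 : (0 < 2 * p)%N by rewrite muln_gt0 p_gt0.
have [N' S_small] := density0_bigcup (fun cj : 'I_M * 'I_k => slices0 cj.2 cj.1) p2_gt0.
have [t le_t fA_t] := fA_large (maxn N' i).
have fB_t : (t <= 2 * p * cnt (fimage f B) t)%N.
  have : (cnt (fimage f A) t <= cnt (fimage f B) t + cnt S t)%N.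
    exact: leq_cntU (fun y _ => @fimage_sub_tail_slices _ f A M y).
  have : (2 * p * cnt S t <= t)%N by apply: S_small; lia.
  nia.
have [n window] := fimage_finite_window f B t.
exists (maxn n i), t, (B `&` [set x | (x < maxn n i)%N]).
split; first exact: leq_maxr.
split; first exact: leq_trans (leq_maxr _ _) le_t.
split; first by move=> x [[_ /= le_Mx] /= lt_xn]; split=> //; lia.
split=> [r|].
  rewrite ler_nat_divQ ?expn_gt0 //.
  apply: leq_trans (cnt_tail_sparse (leq_maxl N i) sparseA r).
  by rewrite leq_mul2l leq_cnt ?orbT // => y _ [].
rewrite ler_inv_natQ //; apply: leq_trans fB_t _.
rewrite leq_mul2l leq_cnt ?orbT // => y lt_yt /(window y lt_yt).
by apply: fimageS => x [Bx /= lt_xn]; split=> //=; lia.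
Qed.

Theorem mainTheorem5 (k : nat) (f : ('I_k -> nat) -> nat) :
  (1 <= k)%N -> minimal f -> bad f.
Proof.
move=> k_gt0 fmin.
have [A [A0 fA_neq0]] : exists A, dbar A = 0%E /\ dbar (fimage f A) <> 0%E.
  apply: contrapT => noA; apply: fmin.1; split=> // A A0.
  by apply: contrapT => fA_neq0; apply: noA; exists A.
apply: (bad_of_density0_slices A0 fA_neq0) => j c.
exact: minimal_slice_image_density0.
Qed.
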